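(* Let $\mathbb D$ be a skew field, $\sigma$ an automorphism of $\mathbb D$, $\delta$ a $\sigma$-derivation, and $R=\mathbb D[x;\sigma,\delta]$. If $f\in R$ is a bounded polynomial of positive degree, then $f$ is irreducible if and only if $\operatorname{End}_R(R/Rf)$ is a skew field.
   Context: $\mathbb D[x;\sigma,\delta]$ is the ring which is a free left $\mathbb D$-module with basis $\{x^n:n\ge0\}$ with $x^nx^m=x^{n+m}$ and $xa=\sigma(a)x+\delta(a)$, where $\delta$ is additive with $\delta(ab)=\sigma(a)\delta(b)+\delta(a)b$. A polynomial $f$ of positive degree is irreducible if $f=ab$ implies $a\in\mathbb D$ or $b\in\mathbb D$. $f$ is bounded if the annihilator $\{r\in R: r(R/Rf)=0\}$ of the left module $R/Rf$ is nonzero. *)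

From HB Require Import structures.
From mathcomp Require Import all_boot all_order all_algebra.
Set Implicit Arguments. Unset Strict Implicit. Unset Printing Implicit Defensive.
Import GRing.Theory.
Local Open Scope ring_scope.

(* D is a skew field (division ring): every nonzero element is a unit.
   (unitRingType is nontrivial: 1 != 0.) *)
Definition is_skew_field (D : unitRingType) : Prop :=
  forall a : D, a != 0 -> a \is a GRing.unit.

Definition is_sigma_derivation (D : nzRingType) (sigma : D -> D) (delta : D -> D)
  : Prop :=
  (forall a b, delta (a + b) = delta a + delta b) /\
  (forall a b, delta (a * b) = sigma a * delta b + delta a * b).

Definition spoly (D R : nzRingType) (iota : D -> R) (x : R) (c : seq D) : R :=
  \sum_(i < size c) iota c`_i * x ^+ i.

(* R (with embedding iota : D -> R and element x) is D[x; sigma, delta]: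
   R is a free left D-module with basis {x^n : n >= 0}, and
   x a = sigma(a) x + delta(a). *)
Definition is_skew_poly_ring (D R : nzRingType) (sigma delta : D -> D)
  (iota : {rmorphism D -> R}) (x : R) : Prop :=
  [/\ (forall a : D, x * iota a = iota (sigma a) * x + iota (delta a)),
      (forall r : R, exists c : seq D, r = spoly iota x c) &
      (forall c : seq D, spoly iota x c = 0 -> forall i, c`_i = 0)].

Definition has_degree (D R : nzRingType) (iota : D -> R) (x : R) (f : R) (n : nat)
  : Prop :=
  exists c : seq D, [/\ size c = n.+1, c`_n != 0 & f = spoly iota x c].

Definition skew_irreducible (D R : nzRingType) (iota : D -> R) (f : R) : Prop :=
  forall a b : R, f = a * b ->
    (exists d : D, a = iota d) \/ (exists d : D, b = iota d).

Definition inRf (R : nzRingType) (f r : R) : Prop := exists q : R, r = q * f.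

(* f is bounded: the annihilator of the left module R/Rf is nonzero. *)
Definition bounded (R : nzRingType) (f : R) : Prop :=
  exists r : R, r != 0 /\ forall s : R, inRf f (r * s).

(* Endomorphisms of the left R-module R/Rf, represented on representatives:
   g : R -> R well defined, additive and R-linear modulo Rf. *)
Definition is_endo (R : nzRingType) (f : R) (g : R -> R) : Prop :=
  [/\ (forall s s', inRf f (s - s') -> inRf f (g s - g s')),
      (forall s s', inRf f (g (s + s') - (g s + g s'))) &
      (forall r s, inRf f (g (r * s) - r * g s))].

Definition endo_eq (R : nzRingType) (f : R) (g h : R -> R) : Prop :=
  forall s, inRf f (g s - h s).

Definition End_quot_is_skew_field (R : nzRingType) (f : R) : Prop :=
  ~ endo_eq f id (fun _ => 0) /\
  forall g, is_endo f g -> ~ endo_eq f g (fun _ => 0) ->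
    exists h, [/\ is_endo f h, endo_eq f (g \o h) id & endo_eq f (h \o g) id].

(* It
   then develops degrees and leading terms in R (R is a domain with left and
   right Euclidean division), and shows that a nonzero element of minimal
   degree of a one-sided ideal generates it.
   - (=>) For irreducible f the left ideal Rs + Rf is all of R when s is not in
     Rf (Bezout), which yields inverses of nonzero endomorphisms.
   - (<=) If f = a b with a, b non-constant, the bound ideal {y | yR in Rf} is
     generated on both sides by an element y0 of minimal degree; writing
     y0 = (c a) b one finds w with b w = y0 in the bound ideal, of smaller
     degree than y0, a contradiction.
   Only the commutation rule x a = sigma(a) x + delta(a) is used. *)

From HB Require Import structures.
From mathcomp Require Import all_boot all_order all_algebra.
From Stdlib Require Import Classical_Prop.
Set Implicit Arguments. Unset Strict Implicit. Unset Printing Implicit Defensive.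
Import GRing.Theory.
Local Open Scope ring_scope.

Section QuotientModule.
Variables (R : nzRingType) (f : R).

Lemma inRf0 : inRf f 0.
Proof. by exists 0; rewrite mul0r. Qed.

Lemma inRf_mulf q : inRf f (q * f).
Proof. by exists q. Qed.

Lemma inRfD r s : inRf f r -> inRf f s -> inRf f (r + s).
Proof. by move=> [q ->] [q' ->]; exists (q + q'); rewrite mulrDl. Qed.

Lemma inRfN r : inRf f r -> inRf f (- r).
Proof. by move=> [q ->]; exists (- q); rewrite mulNr. Qed.

Lemma inRfB r s : inRf f r -> inRf f s -> inRf f (r - s).
Proof. by move=> Hr Hs; apply: inRfD => //; apply: inRfN. Qed.

Lemma inRfM r s : inRf f r -> inRf f (s * r).
Proof. by move=> [q ->]; exists (s * q); rewrite mulrA. Qed.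

Lemma inRf_mulr r t : inRf f (f * t) -> inRf f r -> inRf f (r * t).
Proof. by move=> Hft [q ->]; rewrite -mulrA; apply: inRfM. Qed.

Lemma rmul_endo t : inRf f (f * t) -> is_endo f (fun s => s * t).
Proof.
move=> Hft; split=> [s s' Hs|s s'|r s].
- by rewrite -mulrBl; apply: inRf_mulr.
- by rewrite mulrDl subrr; apply: inRf0.
- by rewrite mulrA subrr; apply: inRf0.
Qed.

Section Endo.
Variables (g : R -> R) (hg : is_endo f g).

Lemma endo_inRf s : inRf f s -> inRf f (g s).
Proof.
case: hg => gwd gadd _ Hs.
have g0 : inRf f (g 0).
  by have := inRfN (gadd 0 0); rewrite addr0 opprB addrK.
have -> : g s = (g s - g 0) + g 0 by rewrite subrK.
by apply: inRfD => //; apply: gwd; rewrite subr0.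
Qed.

Lemma endo_rmul s : inRf f (g s - s * g 1).
Proof. by case: hg => _ _ glin; have := glin s 1; rewrite mulr1. Qed.

Lemma endo_stable : inRf f (f * g 1).
Proof.
have -> : f * g 1 = g f - (g f - f * g 1) by rewrite opprB addrC subrK.
by apply: inRfB; [apply: endo_inRf; exists 1; rewrite mul1r | apply: endo_rmul].
Qed.

Lemma endo_nonzero : ~ endo_eq f g (fun _ => 0) -> ~ inRf f (g 1).
Proof.
move=> gnz Hu; apply: gnz => s; rewrite subr0.
have -> : g s = (g s - s * g 1) + s * g 1 by rewrite subrK.
by apply: inRfD; [apply: endo_rmul | apply: inRfM].
Qed.

End Endo.

Lemma endo_injective g : End_quot_is_skew_field f -> is_endo f g ->
  ~ endo_eq f g (fun _ => 0) -> forall s, inRf f (g s) -> inRf f s.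
Proof.
move=> [_ Hinv] hg gnz s Hgs.
have [h [hh _ hgK]] := Hinv g hg gnz.
have -> : s = h (g s) - (h (g s) - s) by rewrite opprB addrC subrK.
by apply: inRfB; [apply: endo_inRf | apply: hgK].
Qed.

(* If f = a b with b outside Rf, then right multiplication by any t with
   b t in Rf is a nonzero endomorphism killing b, so such t lie in Rf. *)
Lemma factor_kernel a b t : End_quot_is_skew_field f -> f = a * b ->
  ~ inRf f b -> inRf f (b * t) -> inRf f t.
Proof.
move=> hE Eab bnot bt; apply: NNPP => nt; apply: bnot.
have ft : inRf f (f * t) by rewrite {2}Eab -mulrA; apply: inRfM.
apply: (endo_injective hE (rmul_endo ft)) bt => E0.
by apply: nt; have := E0 1; rewrite mul1r subr0.
Qed.

End QuotientModule.

Section SkewPolynomials.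
Variables (D : unitRingType) (R : nzRingType) (sigma : {rmorphism D -> D})
  (delta : D -> D) (iota : {rmorphism D -> R}) (x : R).
Hypothesis hD : is_skew_field D.
Hypothesis hsigma : bijective sigma.
Hypothesis hR : is_skew_poly_ring sigma delta iota x.

Definition deg_lt (n : nat) (r : R) : Prop :=
  exists c : nat -> D, r = \sum_(i < n) iota (c i) * x ^+ i.

Lemma deg_lt0 n : deg_lt n 0.
Proof. by exists (fun _ => 0); rewrite big1 // => i _; rewrite rmorph0 mul0r. Qed.

Lemma deg_ltD n r s : deg_lt n r -> deg_lt n s -> deg_lt n (r + s).
Proof.
move=> [c ->] [d ->]; exists (fun i => c i + d i); rewrite -big_split /=.
by apply: eq_bigr => i _; rewrite rmorphD mulrDl.
Qed.

Lemma deg_ltN n r : deg_lt n r -> deg_lt n (- r).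
Proof.
move=> [c ->]; exists (fun i => - c i); rewrite -sumrN.
by apply: eq_bigr => i _; rewrite rmorphN mulNr.
Qed.

Lemma deg_ltB n r s : deg_lt n r -> deg_lt n s -> deg_lt n (r - s).
Proof. by move=> Hr Hs; apply: deg_ltD => //; apply: deg_ltN. Qed.

Lemma deg_lt_widen m n r : (m <= n)%N -> deg_lt m r -> deg_lt n r.
Proof.
move=> le [c ->]; exists (fun i => if (i < m)%N then c i else 0).
rewrite (big_ord_widen n (fun i => iota (c i) * x ^+ i) le) big_mkcond /=.
by apply: eq_bigr => i _; case: ifP => //; rewrite rmorph0 mul0r.
Qed.

Lemma deg_lt_sum m n (F : 'I_n -> R) :
  (forall i, deg_lt m (F i)) -> deg_lt m (\sum_(i < n) F i).
Proof. by move=> HF; elim/big_ind: _ => //; [apply: deg_lt0 | apply: deg_ltD]. Qed.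

Lemma deg_lt_zero r : deg_lt 0 r -> r = 0.
Proof. by move=> [c ->]; rewrite big_ord0. Qed.

Lemma deg_ltS n r :
  deg_lt n.+1 r <-> exists u d, deg_lt n u /\ r = u + iota d * x ^+ n.
Proof.
split=> [[c ->]|[u [d [[c ->] ->]]]].
  exists (\sum_(i < n) iota (c i) * x ^+ i), (c n).
  by rewrite big_ord_recr; split=> //; exists c.
exists (fun i => if (i < n)%N then c i else d).
rewrite big_ord_recr /= ltnn; congr (_ + _).
by apply: eq_bigr => i _; rewrite ltn_ord.
Qed.

Lemma deg_lt_monomial n i d : (i < n)%N -> deg_lt n (iota d * x ^+ i).
Proof.
move=> lt; apply: (deg_lt_widen lt); apply/deg_ltS.
by exists 0, d; split; [apply: deg_lt0 | rewrite add0r].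
Qed.

Lemma deg_lt_exists r : exists n, deg_lt n r.
Proof. by case: hR => _ hspan _; have [c ->] := hspan r; exists (size c), (nth 0 c). Qed.

Lemma deg_lt_free n (c : nat -> D) :
  \sum_(i < n) iota (c i) * x ^+ i = 0 -> forall i, (i < n)%N -> c i = 0.
Proof.
move=> H i lt; case: hR => _ _ hfree.
have H' : spoly iota x (mkseq c n) = 0.
  by rewrite /spoly size_mkseq -[RHS]H; apply: eq_bigr => j _; rewrite nth_mkseq.
by have := hfree _ H' i; rewrite nth_mkseq.
Qed.

(* r has leading term a x^m: r - a x^m has degree < m (a may be 0). *)
Definition lead_term (r : R) (a : D) (m : nat) : Prop :=
  deg_lt m (r - iota a * x ^+ m).

Lemma lead_term_monomial a m : lead_term (iota a * x ^+ m) a m.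
Proof. by rewrite /lead_term subrr; apply: deg_lt0. Qed.

Lemma lead_term_deg r a m : lead_term r a m -> deg_lt m.+1 r.
Proof. by move=> H; apply/deg_ltS; exists (r - iota a * x ^+ m), a; rewrite subrK. Qed.

Lemma lead_term_coef0 r a m : lead_term r a m -> deg_lt m r -> a = 0.
Proof.
move=> H1 H2.
have [c Hc] : deg_lt m (iota a * x ^+ m).
  by have := deg_ltB H2 H1; rewrite opprB addrC subrK.
pose c' i := if (i < m)%N then c i else - a.
have Hs : \sum_(i < m.+1) iota (c' i) * x ^+ i = 0.
  rewrite big_ord_recr /= /c' ltnn rmorphN mulNr.
  rewrite (eq_bigr (fun i : 'I_m => iota (c i) * x ^+ i)) => [|i _]; last by rewrite ltn_ord.
  by rewrite -Hc subrr.
by have := deg_lt_free Hs (ltnSn m); rewrite /c' ltnn => /eqP; rewrite oppr_eq0 => /eqP.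
Qed.

Lemma lead_term_exists r : r != 0 -> exists a m, a != 0 /\ lead_term r a m.
Proof.
have [n] := deg_lt_exists r; elim: n r => [|n IH] r Hr rnz.
  by move: rnz; rewrite (deg_lt_zero Hr) eqxx.
move/deg_ltS: Hr rnz => [u [d [Hu ->]]] rnz.
have [d0|dnz] := eqVneq d 0.
  by rewrite d0 rmorph0 mul0r addr0 in rnz *; apply: IH Hu rnz.
by exists d, n; split=> //; rewrite /lead_term addrK.
Qed.

Lemma lead_term_lt r a m n : lead_term r a m -> a != 0 -> deg_lt n r -> (m < n)%N.
Proof.
move=> H anz Hn; rewrite ltnNge; apply/negP => le.
by move/eqP: anz; apply; apply: (lead_term_coef0 H); apply: deg_lt_widen Hn.
Qed.

Lemma lead_term_uniq r a m b k :
  lead_term r a m -> a != 0 -> lead_term r b k -> b != 0 -> m = k.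
Proof.
move=> Ha anz Hb bnz; apply/eqP; rewrite eqn_leq.
by rewrite -ltnS (lead_term_lt Ha anz (lead_term_deg Hb))
  -ltnS (lead_term_lt Hb bnz (lead_term_deg Ha)).
Qed.

Lemma lead_term_neq0 r a m : lead_term r a m -> a != 0 -> r != 0.
Proof.
move=> H anz; apply/eqP => r0.
by have := lead_term_lt H anz; rewrite r0 => /(_ 0%N (deg_lt0 0)).
Qed.

Lemma deg_lt_lmulC n d r : deg_lt n r -> deg_lt n (iota d * r).
Proof.
move=> [c ->]; exists (fun i => d * c i); rewrite mulr_sumr.
by apply: eq_bigr => i _; rewrite rmorphM mulrA.
Qed.

Lemma deg_lt_lmulX n r : deg_lt n r -> deg_lt n.+1 (x * r).
Proof.
move=> [c ->]; rewrite mulr_sumr; apply: deg_lt_sum => i.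
case: hR => hx _ _.
rewrite mulrA hx mulrDl -mulrA -exprS.
by apply: deg_ltD; apply: deg_lt_monomial; rewrite ?ltnS // ltnW.
Qed.

Lemma deg_lt_lmulXn n k r : deg_lt n r -> deg_lt (k + n) (x ^+ k * r).
Proof.
move=> H; elim: k => [|k IH]; first by rewrite expr0 mul1r.
by rewrite exprS -mulrA addSn; apply: deg_lt_lmulX.
Qed.

Lemma lead_term_Xn_C k d : lead_term (x ^+ k * iota d) (iter k sigma d) k.
Proof.
rewrite /lead_term; elim: k => [|k IH].
  by rewrite /= !expr0 mul1r mulr1 subrr; apply: deg_lt0.
case: hR => hx _ _.
have -> : x ^+ k.+1 * iota d - iota (iter k.+1 sigma d) * x ^+ k.+1 =
    x * (x ^+ k * iota d - iota (iter k sigma d) * x ^+ k)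
    + iota (delta (iter k sigma d)) * x ^+ k.
  rewrite mulrBr !mulrA -exprS hx mulrDl -mulrA -exprS iterS.
  by rewrite opprD addrA subrK.
by apply: deg_ltD; [apply: deg_lt_lmulX | apply: deg_lt_monomial].
Qed.

Lemma deg_lt_rmulC n d r : deg_lt n r -> deg_lt n (r * iota d).
Proof.
move=> [c ->]; rewrite mulr_suml; apply: deg_lt_sum => i.
rewrite -mulrA; apply: deg_lt_lmulC.
exact: deg_lt_widen (ltn_ord i) (lead_term_deg (lead_term_Xn_C i d)).
Qed.

Lemma deg_lt_rmulXn n k r : deg_lt n r -> deg_lt (n + k) (r * x ^+ k).
Proof.
move=> [c ->]; rewrite mulr_suml; apply: deg_lt_sum => i.
by rewrite -mulrA -exprD; apply: deg_lt_monomial; rewrite ltn_add2r.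
Qed.

Lemma deg_lt_mul m n r s : deg_lt m r -> deg_lt n s -> deg_lt (m + n) (r * s).
Proof.
move=> Hr [c ->]; rewrite mulr_sumr; apply: deg_lt_sum => i.
rewrite mulrA; apply: deg_lt_widen (deg_lt_rmulXn i (deg_lt_rmulC (c i) Hr)).
by rewrite leq_add2l ltnW.
Qed.

Lemma lead_term_mul r a m s b n : lead_term r a m -> lead_term s b n ->
  lead_term (r * s) (a * iter m sigma b) (m + n).
Proof.
rewrite /lead_term => Hr Hs.
set u := r - iota a * x ^+ m in Hr; set v := s - iota b * x ^+ n in Hs.
have Hw := lead_term_Xn_C m b; rewrite /lead_term in Hw.
set w := x ^+ m * iota b - iota (iter m sigma b) * x ^+ m in Hw.
have -> : r * s - iota (a * iter m sigma b) * x ^+ (m + n) =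
    r * v + u * (iota b * x ^+ n) + iota a * (w * x ^+ n).
  rewrite /u /v /w rmorphM exprD !mulrBr !mulrBl !mulrA.
  by rewrite !addrA subrK mulrBr !mulrA addrA subrK.
apply: deg_ltD; [apply: deg_ltD|].
- have -> : r = u + iota a * x ^+ m by rewrite /u subrK.
  rewrite mulrDl -mulrA.
  by apply: deg_ltD; [apply: deg_lt_mul | apply: deg_lt_lmulC; apply: deg_lt_lmulXn].
- by rewrite mulrA; apply: deg_lt_rmulXn; apply: deg_lt_rmulC.
- by apply: deg_lt_lmulC; apply: deg_lt_rmulXn.
Qed.

Lemma mulD_neq0 (a b : D) : a != 0 -> b != 0 -> a * b != 0.
Proof.
move=> anz; apply: contra => /eqP ab0.
by rewrite -(mulKr (hD anz) b) ab0 mulr0.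
Qed.

Lemma iter_sigma_neq0 k (b : D) : b != 0 -> iter k sigma b != 0.
Proof.
move=> bnz; elim: k => [|k IH] //=; apply: contra IH => /eqP H.
by apply/eqP; apply: (bij_inj hsigma); rewrite H rmorph0.
Qed.

Lemma iter_sigma_surj k (y : D) : exists a, iter k sigma a = y.
Proof.
case: hsigma => g sigmaK gK; exists (iter k g y).
by elim: k => [|k IH] //; rewrite iterSr /= gK.
Qed.

Lemma lead_term_mul_neq0 r a m s b n :
  lead_term r a m -> a != 0 -> lead_term s b n -> b != 0 ->
  lead_term (r * s) (a * iter m sigma b) (m + n) /\ a * iter m sigma b != 0.
Proof.
move=> Hr anz Hs bnz; split; first exact: lead_term_mul.
by apply: mulD_neq0 => //; apply: iter_sigma_neq0.
Qed.

Lemma mulR_neq0 (r s : R) : r != 0 -> s != 0 -> r * s != 0.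
Proof.
move=> rnz snz.
have [a [m [anz Ha]]] := lead_term_exists rnz.
have [b [n [bnz Hb]]] := lead_term_exists snz.
by have [H1 H2] := lead_term_mul_neq0 Ha anz Hb bnz; apply: lead_term_neq0 H1 H2.
Qed.

Lemma mulR_lcancel (r s t : R) : r != 0 -> r * s = r * t -> s = t.
Proof.
move=> rnz E; apply/eqP; rewrite -subr_eq0; apply/negPn/negP => nz.
by move: (mulR_neq0 rnz nz); rewrite mulrBr E subrr eqxx.
Qed.

Lemma mulR_rcancel (r s t : R) : r != 0 -> s * r = t * r -> s = t.
Proof.
move=> rnz E; apply/eqP; rewrite -subr_eq0; apply/negPn/negP => nz.
by move: (mulR_neq0 nz rnz); rewrite mulrBl E subrr eqxx.
Qed.

(* Cancelling the top term u + d x^k against an element with the same leading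
   term lowers the degree; this is the step of Euclidean division. *)
Lemma lead_term_reduce u d k r : deg_lt k u -> lead_term r d k ->
  deg_lt k (u + iota d * x ^+ k - r).
Proof. by move=> Hu Hr; rewrite -addrA -opprB; apply: deg_ltB. Qed.

Lemma left_division f b n g : lead_term f b n -> b != 0 ->
  exists q, deg_lt n (g - q * f).
Proof.
move=> Hf bnz; have [k] := deg_lt_exists g; elim: k g => [|k IH] g Hg.
  by exists 0; rewrite mul0r subr0; apply: deg_lt_widen Hg.
have [le|lt] := leqP k.+1 n.
  by exists 0; rewrite mul0r subr0; apply: deg_lt_widen Hg.
move/deg_ltS: Hg => [u [d [Hu ->]]].
set j := (k - n)%N; have jn : (j + n)%N = k by rewrite subnK // -ltnS.
set al := d * (iter j sigma b)^-1.
have Hm := lead_term_mul (lead_term_monomial al j) Hf.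
rewrite /al mulrVK ?jn in Hm; last exact/hD/iter_sigma_neq0.
have [q Hq] := IH (u + iota d * x ^+ k - iota al * x ^+ j * f) (lead_term_reduce Hu Hm).
by exists (iota al * x ^+ j + q); rewrite mulrDl opprD addrA.
Qed.

(* Right Euclidean division: g = f q + (remainder of degree < deg f);
   surjectivity of sigma lets us match the leading coefficient. *)
Lemma right_division f b n g : lead_term f b n -> b != 0 ->
  exists q, deg_lt n (g - f * q).
Proof.
move=> Hf bnz; have [k] := deg_lt_exists g; elim: k g => [|k IH] g Hg.
  by exists 0; rewrite mulr0 subr0; apply: deg_lt_widen Hg.
have [le|lt] := leqP k.+1 n.
  by exists 0; rewrite mulr0 subr0; apply: deg_lt_widen Hg.
move/deg_ltS: Hg => [u [d [Hu ->]]].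
set j := (k - n)%N; have nj : (n + j)%N = k by rewrite addnC subnK // -ltnS.
have [al Hal] := iter_sigma_surj n (b^-1 * d).
have Hm := lead_term_mul Hf (lead_term_monomial al j).
rewrite Hal mulVKr ?nj in Hm; last exact: hD.
have [q Hq] := IH (u + iota d * x ^+ k - f * (iota al * x ^+ j)) (lead_term_reduce Hu Hm).
by exists (iota al * x ^+ j + q); rewrite mulrDr opprD addrA.
Qed.

Definition min_degree (I : R -> Prop) (g : R) (m : nat) : Prop :=
  [/\ I g, exists2 c, c != 0 & lead_term g c m
    & forall y, I y -> deg_lt m y -> y = 0].

Lemma min_degree_exists (I : R -> Prop) r : I r -> r != 0 ->
  exists g m, min_degree I g m.
Proof.
have [k] := deg_lt_exists r; elim: k r => [|k IH] r Hk Ir rnz.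
  by move: rnz; rewrite (deg_lt_zero Hk) eqxx.
have [c [m [cnz Hc]]] := lead_term_exists rnz.
have mk : (m <= k)%N by rewrite -ltnS (lead_term_lt Hc cnz Hk).
case: (classic (exists y, [/\ I y, deg_lt m y & y != 0])) => [[y [Iy Hy ynz]]|none].
  exact: IH (deg_lt_widen mk Hy) Iy ynz.
exists r, m; split=> // [|y Iy Hy]; first by exists c.
by have [//|ynz] := eqVneq y 0; case: none; exists y.
Qed.

Section MinimalGenerator.
Variables (I : R -> Prop) (g : R) (m : nat).
Hypothesis hmin : min_degree I g m.
Hypothesis hsub : forall y z, I y -> I z -> I (y - z).

Lemma min_degree_lgen : (forall q y, I y -> I (q * y)) ->
  forall y, I y -> exists q, y = q * g.
Proof.
case: hmin => Ig [c cnz Hc] Imin Ileft y Iy.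
have [q Hq] := left_division y Hc cnz; exists q.
by apply/eqP; rewrite -subr_eq0; apply/eqP/Imin => //; apply/hsub/Ileft.
Qed.

Lemma min_degree_rgen : (forall q y, I y -> I (y * q)) ->
  forall y, I y -> exists q, y = g * q.
Proof.
case: hmin => Ig [c cnz Hc] Imin Iright y Iy.
have [q Hq] := right_division y Hc cnz; exists q.
by apply/eqP; rewrite -subr_eq0; apply/eqP/Imin => //; apply/hsub/Iright.
Qed.

End MinimalGenerator.

Lemma iotaVK d : d != 0 -> iota d^-1 * iota d = 1.
Proof. by move=> dnz; rewrite -rmorphM mulVr ?rmorph1 //; apply: hD. Qed.

Section FixedPolynomial.
Variables (f : R) (c : D) (n : nat).
Hypotheses (hf : lead_term f c n) (hc : c != 0).

Lemma inRf_deg r e k : inRf f r -> lead_term r e k -> e != 0 -> (n <= k)%N.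
Proof.
move=> [q Eq] Hr enz.
have qnz : q != 0.
  by apply: contraTneq (lead_term_neq0 Hr enz) => q0; rewrite Eq q0 mul0r eqxx.
have [a [m [anz Hq]]] := lead_term_exists qnz.
have [Hqf qfnz] := lead_term_mul_neq0 Hq anz hf hc.
by rewrite -Eq in Hqf; rewrite -(lead_term_uniq Hqf qfnz Hr enz) leq_addl.
Qed.

Lemma one_notin_Rf : (0 < n)%N -> ~ inRf f 1.
Proof.
move=> npos H1; have := inRf_deg H1 _ (oner_neq0 D).
have -> : (1 : R) = iota 1 * x ^+ 0 by rewrite rmorph1 expr0 mulr1.
move/(_ 0%N (lead_term_monomial 1 0)); rewrite leqn0 => /eqP n0.
by move: npos; rewrite n0.
Qed.

Hypothesis hirr : skew_irreducible iota f.

Lemma bezout s : ~ inRf f s -> exists al be, al * s + be * f = 1.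
Proof.
move=> ns; pose I h := exists al be, h = al * s + be * f.
have [g [m gmin]] : exists g m, min_degree I g m.
  apply: (@min_degree_exists I f); last exact: lead_term_neq0 hf hc.
  by exists 0, 1; rewrite mul0r add0r mul1r.
have Isub y z : I y -> I z -> I (y - z).
  move=> [a [b ->]] [a' [b' ->]]; exists (a - a'), (b - b').
  by rewrite !mulrBl opprD !addrA (addrAC _ (b * f)).
have Imul q y : I y -> I (q * y).
  by move=> [a [b ->]]; exists (q * a), (q * b); rewrite mulrDr !mulrA.
have [q Hs] : exists q, s = q * g.
  by apply: (min_degree_lgen gmin) => //; exists 1, 0; rewrite mul1r mul0r addr0.
have [q' Hqg] : exists q', f = q' * g.
  by apply: (min_degree_lgen gmin) => //; exists 0, 1; rewrite mul0r add0r mul1r.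
case: gmin => [[al [be Eg]] [e enz He] _].
case: (hirr Hqg) => [[d Hd]|[d Hd]].
- (* f = d g with d a unit: then s = q g lies in Rf *)
  have dnz : d != 0.
    by apply: contraTneq (lead_term_neq0 hf hc) => d0; rewrite Hqg Hd d0 rmorph0 mul0r eqxx.
  case: ns; exists (q * iota d^-1).
  by rewrite Hs Hqg Hd -!mulrA (mulrA (iota _)) iotaVK // mul1r.
- (* g = d is a unit of R, so 1 lies in Rs + Rf *)
  have dnz : d != 0.
    by apply: contraTneq (lead_term_neq0 He enz) => d0; rewrite Hd d0 rmorph0 eqxx.
  exists (iota d^-1 * al), (iota d^-1 * be).
  by rewrite -!mulrA -mulrDr -Eg Hd iotaVK.
Qed.

Lemma rmul_injective u t : inRf f (f * u) -> ~ inRf f u -> inRf f (t * u) -> inRf f t.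
Proof.
move=> fu nu tu; apply: NNPP => nt; apply: nu.
have [al [be E]] := bezout nt.
have -> : u = al * (t * u) + be * (f * u) by rewrite !mulrA -mulrDl E mul1r.
by apply: inRfD; apply: inRfM.
Qed.

(* First direction: irreducible f of positive degree gives a skew field
   End(R/Rf); the inverse of g = (right mult. by u) is right mult. by the
   Bezout coefficient al of al u + be f = 1. *)
Lemma irreducible_End_skew_field : (0 < n)%N -> End_quot_is_skew_field f.
Proof.
move=> npos; split=> [E|g hg gnz].
  by apply: (one_notin_Rf npos); have := E 1; rewrite subr0.
have unot := endo_nonzero hg gnz; have fu := endo_stable hg.
set u := g 1 in unot fu.
have [al [be E]] := bezout unot.
have alu : al * u = 1 - be * f by rewrite -E addrK.
have fal : inRf f (f * al).
  apply: (rmul_injective fu unot); rewrite -mulrA alu mulrBr mulr1 mulrA.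
  by apply: inRfB; [exists 1; rewrite mul1r | apply: inRf_mulf].
exists (fun s => s * al); split; first exact: rmul_endo.
- move=> s /=.
  have -> : g (s * al) - s = (g (s * al) - s * al * u) - (s * be) * f.
    by rewrite -(mulrA s al) alu mulrBr mulr1 !mulrA opprB addrA addrAC addrK.
  by apply: inRfB; [apply: endo_rmul | apply: inRf_mulf].
- move=> s /=.
  have -> : g s * al - s = (g s - s * u) * al + s * (u * al - 1).
    by rewrite mulrBl mulrBr mulr1 !mulrA addrA subrK.
  apply: inRfD; first by apply: inRf_mulr => //; apply: endo_rmul.
  apply/inRfM/(rmul_injective fu unot).
  have -> : (u * al - 1) * u = - (u * be * f).
    by rewrite mulrBl mul1r -(mulrA u al u) alu mulrBr mulr1 addrAC subrr add0r !mulrA.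
  by apply: inRfN; apply: inRf_mulf.
Qed.

End FixedPolynomial.

Lemma nonconst_lead_term r : ~ (exists d, r = iota d) ->
  exists e m, [/\ e != 0, lead_term r e m & (0 < m)%N].
Proof.
move=> nd; have rnz : r != 0.
  by apply/eqP => r0; apply: nd; exists 0; rewrite r0 rmorph0.
have [e [[|m] [enz He]]] := lead_term_exists rnz; last by exists e, m.+1.
case: nd; exists e; apply/eqP; rewrite -subr_eq0; apply/eqP.
by move: (deg_lt_zero He); rewrite expr0 mulr1.
Qed.

Lemma low_deg_notin_Rf f c n b eb mb : lead_term f c n -> c != 0 ->
  lead_term b eb mb -> eb != 0 -> (mb < n)%N -> ~ inRf f b.
Proof.
move=> hf hc Hb ebnz lt /(inRf_deg hf hc)/(_ Hb ebnz).
by rewrite leqNgt lt.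
Qed.

Lemma bound_factor (y0 b cc t w : R) : y0 != 0 -> b != 0 ->
  y0 = cc * b -> y0 * b = t * y0 -> cc * y0 = y0 * w -> b * w = y0.
Proof.
move=> y0nz bnz Ey0 Et Ew.
have cbt : cc * b = t * cc by apply: (mulR_rcancel bnz); rewrite -Ey0 Et Ey0 mulrA.
by apply: (mulR_lcancel y0nz); rewrite mulrA Et -mulrA -Ew mulrA -cbt -Ey0.
Qed.

(* Right
   multiplication by t is injective on R/Rf whenever b t lies in Rf, so the
   bound ideal J = {y | y R in Rf}, generated on both sides by an element y0 of
   minimal degree, would contain the element w with b w = y0, of smaller degree. *)
Lemma End_skew_field_irreducible f c n : lead_term f c n -> c != 0 ->
  bounded f -> End_quot_is_skew_field f -> skew_irreducible iota f.
Proof.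
move=> hf hc [r0 [r0nz Jr0]] hE a b Eab.
case: (classic (exists d, a = iota d)) => [|na]; first by left.
case: (classic (exists d, b = iota d)) => [|nb]; first by right.
have [ea [ma [eanz Ha mapos]]] := nonconst_lead_term na.
have [eb [mb [ebnz Hb mbpos]]] := nonconst_lead_term nb.
have [Hab abnz] := lead_term_mul_neq0 Ha eanz Hb ebnz; rewrite -Eab in Hab.
have bnot : ~ inRf f b.
  by apply: (low_deg_notin_Rf Hab abnz Hb ebnz); rewrite -{1}(add0n mb) ltn_add2r.
have b_kernel t : inRf f (b * t) -> inRf f t := factor_kernel hE Eab bnot.
pose J y := forall s, inRf f (y * s).
have Jsub y z : J y -> J z -> J (y - z) by move=> Jy Jz s; rewrite mulrBl; apply: inRfB.
have Jl q y : J y -> J (q * y) by move=> Jy s; rewrite -mulrA; apply: inRfM.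
have Jr q y : J y -> J (y * q) by move=> Jy s; rewrite -mulrA.
have [y0 [m0 y0min]] := @min_degree_exists J r0 Jr0 r0nz.
have [Jy0 [c0 c0nz Hc0] J_min] := y0min.
have y0nz := lead_term_neq0 Hc0 c0nz.
have [c1 Ey0] : inRf f y0 by have := Jy0 1; rewrite mulr1.
rewrite Eab mulrA in Ey0.
have [t Et] := min_degree_lgen y0min Jsub Jl (Jr b _ Jy0).
have [w Ew] := min_degree_rgen y0min Jsub Jr (Jl (c1 * a) _ Jy0).
have bw := bound_factor y0nz (lead_term_neq0 Hb ebnz) Ey0 Et Ew.
have Jw : J w by move=> s; apply: b_kernel; rewrite mulrA bw.
have wnz : w != 0 by apply: contraNneq y0nz => w0; rewrite -bw w0 mulr0.
have [ew [mw [ewnz Hw]]] := lead_term_exists wnz.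
have [Hbw bwnz] := lead_term_mul_neq0 Hb ebnz Hw ewnz; rewrite bw in Hbw.
suff w0 : w = 0 by rewrite w0 eqxx in wnz.
apply: J_min Jw (deg_lt_widen _ (lead_term_deg Hw)).
by rewrite (lead_term_uniq Hc0 c0nz Hbw bwnz) addnC -addn1 leq_add2l.
Qed.

End SkewPolynomials.

Unset Implicit Arguments.

Theorem mainTheorem7 (D : unitRingType) (R : nzRingType)
  (sigma : {rmorphism D -> D}) (delta : D -> D)
  (iota : {rmorphism D -> R}) (x : R)
  (hD : is_skew_field D) (hsigma : bijective sigma)
  (hdelta : is_sigma_derivation sigma delta)
  (hR : is_skew_poly_ring sigma delta iota x)
  (f : R) (hdeg : exists n, (0 < n)%N /\ has_degree iota x f n)
  (hbd : bounded f) :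
  skew_irreducible iota f <-> End_quot_is_skew_field f.
Proof.
have [n [npos [c [size_c cn_neq0 Ef]]]] := hdeg.
have hf : lead_term iota x f c`_n n.
  by rewrite /lead_term Ef /spoly size_c big_ord_recr /= addrK; exists (nth 0 c).
split=> [hirr|hE].
- exact: (irreducible_End_skew_field hD hsigma hR hf cn_neq0 hirr npos).
- exact: (End_skew_field_irreducible hD hsigma hR hf cn_neq0 hbd hE).
Qed.
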